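(* Suppose $a=1$ (so the actual beliefs are updated by the min-protocol at every time step) and conditions (i)–(iii) hold: (i) for every pair of distinct hypotheses $\theta_p,\theta_q$, $\mathcal{S}(\theta_p,\theta_q)\neq\emptyset$; (ii) $\mathcal{G}$ is strongly connected; (iii) $\pi_{i,0}(\theta)>0,\mu_{i,0}(\theta)>0$ for all $i,\theta$. Then for every $i\in\mathcal{V}$, $\mu_{i,t}(\theta^\star)\to1$ a.s., and for every $i\in\mathcal{V}$ and every $\theta\in\Theta\setminus\{\theta^\star\}$, $$\liminf_{t\to\infty}-\frac{\log\mu_{i,t}(\theta)}{t}\ \ge\ \max_{v\in\mathcal{S}(\theta^\star,\theta)}K_v(\theta^\star,\theta)\quad\text{a.s.}$$
   Context: Agents $\mathcal{V}=\{1,\dots,n\}$ interact over a directed graph $\mathcal{G}=(\mathcal{V},\mathcal{E})$; $(j,i)\in\mathcal{E}$ means $j$ can send information to $i$, and $\mathcal{N}_i=\{j:(j,i)\in\mathcal{E}\}$. $\Theta=\{\theta_1,\dots,\theta_m\}$ is a finite set of hypotheses, $\theta^\star\in\Theta$ the fixed true state. Each agent $i$ has a finite signal space $\mathcal{S}_i$ and known marginal likelihoods $l_i(\cdot|\theta)$ of a joint likelihood $l(\cdot|\theta)$ on $\mathcal{S}_1\times\cdots\times\mathcal{S}_n$, with $l_i(w_i|\theta)>0$ for all $w_i,\theta$. Signal profiles $s_t$, $t\in\mathbb{N}_+$, are i.i.d. over time with law $l(\cdot|\theta^\star)$ (possibly correlated across agents); agent $i$ sees $s_{i,t}$. ''a.s.''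 refers to the product measure $\mathbb{P}^{\theta^\star}$ on sequences of profiles. $K_i(\theta_p,\theta_q)=D(l_i(\cdot|\theta_p)\|l_i(\cdot|\theta_q))$ (KL divergence); $\mathcal{S}(\theta_p,\theta_q)=\{i:K_i(\theta_p,\theta_q)>0\}$. Rule with $a=1$: for all $t\in\mathbb{N}$, $\pi_{i,t+1}(\theta)=\dfrac{l_i(s_{i,t+1}|\theta)\pi_{i,t}(\theta)}{\sum_{p}l_i(s_{i,t+1}|\theta_p)\pi_{i,t}(\theta_p)}$ and $\mu_{i,t+1}(\theta)=\dfrac{\min\{\{\mu_{j,t}(\theta)\}_{j\in\mathcal{N}_i},\pi_{i,t+1}(\theta)\}}{\sum_{p}\min\{\{\mu_{j,t}(\theta_p)\}_{j\in\mathcal{N}_i},\pi_{i,t+1}(\theta_p)\}}$, with initial probability vectors $\boldsymbol\pi_{i,0},\boldsymbol\mu_{i,0}$. *)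

From HB Require Import structures.
From mathcomp Require Import all_boot all_order all_algebra.
From mathcomp Require Import all_classical all_reals all_analysis.
Set Implicit Arguments. Unset Strict Implicit. Unset Printing Implicit Defensive.
Import Order.TTheory GRing.Theory Num.Theory.
Local Open Scope ring_scope.

Section Model.
Variables (R : realType) (n m : nat) (S : 'I_n -> finType).

Definition profile := {dffun forall i : 'I_n, S i}.

(* joint likelihood l(. | theta), indexed by hypotheses theta : 'I_m *)
Variable l : 'I_m -> profile -> R.

Definition lmarg (i : 'I_n) (th : 'I_m) (a : S i) : R :=
  \sum_(w : profile | w i == a) l th w.
Arguments lmarg : clear implicits.


Definition KL (i : 'I_n) (p q : 'I_m) : R :=
  \sum_(a : S i) lmarg i p a * ln (lmarg i p a / lmarg i q a).

(* S(theta_p, theta_q) as a predicate on agents *)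
Definition informative (p q : 'I_m) (i : 'I_n) : bool := 0 < KL i p q.

Variables (E : rel 'I_n) (* E j i  <->  (j,i) is an edge: j sends to i *)
          (pi0 mu0 : 'I_n -> 'I_m -> R).

(* One step of the rule with a = 1, driven by the new profile w = s_{t+1}. *)
Definition pi_step (w : profile) (pi : 'I_n -> 'I_m -> R) i th : R :=
  lmarg i th (w i) * pi i th / \sum_(p < m) lmarg i p (w i) * pi i p.

Definition min_nb (mu pi' : 'I_n -> 'I_m -> R) i th : R :=
  \big[Order.min/pi' i th]_(j | E j i) mu j th.

Definition mu_step (mu pi' : 'I_n -> 'I_m -> R) i th : R :=
  min_nb mu pi' i th / \sum_(p < m) min_nb mu pi' i p.

(* beliefs (pi_t, mu_t) given the signal sequence; s k is the profile s_{k+1} *)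
Fixpoint beliefs (s : nat -> profile) (t : nat)
  : ('I_n -> 'I_m -> R) * ('I_n -> 'I_m -> R) :=
  match t with
  | 0 => (pi0, mu0)
  | t'.+1 =>
      let pm := beliefs s t' in
      let pi' := pi_step (s t') pm.1 in
      (pi', mu_step pm.2 pi')
  end.

Definition pi_b s t := (beliefs s t).1.
Definition mu_b s t := (beliefs s t).2.

End Model.
Arguments lmarg {R n m S} l i th a.

From HB Require Import structures.
From mathcomp Require Import all_boot all_order all_algebra.
From mathcomp Require Import all_classical all_reals all_analysis.
From mathcomp Require Import ring lra zify.
Import Order.TTheory GRing.Theory Num.Theory.
Import numFieldNormedType.Exports.
Local Open Scope ring_scope.
Local Open Scope classical_set_scope.

(** Each private belief [pi_j] is a Bayesian posterior, so the log-ratio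
    [ln pi_j,t(th) - ln pi_j,t(thstar)] is a sum of log-likelihood ratios of the
    signals seen by [j]. By the strong law of large numbers for empirical
    signal frequencies (obtained from Chernoff bounds and Borel-Cantelli) it
    drifts like [-t K_j(thstar, th)]. Hence [pi_j,t(thstar)] stays bounded away from
    [0]; since the normaliser of the min-protocol never exceeds [1], so does
    [mu_i,t(thstar)], say above [dl]. Then one protocol step divides by at most
    [dl]: [mu_i,t+1 <= mu_j,t / dl] for each in-neighbour [j] and
    [mu_i,t+1 <= pi_i,t+1 / dl]. Following a path from any agent [v] to [i]
    gives [ln mu_i,t(th) <= -t (K_v(thstar, th) - eps)] eventually, which is the
    rate; by identifiability every [th <> thstar] has some informative [v], so
    [mu_i,t(th) -> 0] and [mu_i,t(thstar) -> 1]. *)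

(** * Strong law of large numbers for signal frequencies *)

Lemma preimage_finTypeE T (U : finType) (Y : T -> U) (A : pred U) :
  [set x | A (Y x)] = \bigcup_(u in [set` enum A]) [set x | Y x = u].
Proof.
apply/seteqP; split => [x /= Ax|x [u /= uA ->]]; last by rewrite mem_enum in uA.
by exists (Y x); rewrite //= mem_enum.
Qed.

Lemma measure_preimage_finType (R : realType) (d : measure_display)
    (T : measurableType d) (mu : {measure set T -> \bar R})
    (U : finType) (Y : T -> U) (A : pred U) :
  (forall u, measurable [set x | Y x = u]) ->
  mu [set x | A (Y x)] = (\sum_(u | A u) mu [set x | Y x = u])%E.
Proof.
move=> Ym; rewrite preimage_finTypeE measure_fin_bigcup //.
  by rewrite -fsbig_seq ?enum_uniq // big_enum.
by move=> u v _ _ [x [/= <- <-]].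
Qed.

Lemma measurable_preimage_finType d (T : measurableType d) (U : finType)
    (Y : T -> U) (A : pred U) :
  (forall u, measurable [set x | Y x = u]) -> measurable [set x | A (Y x)].
Proof.
by move=> Ym; rewrite preimage_finTypeE; apply: fin_bigcup_measurable.
Qed.

Lemma negligible_limsup_geometric (R : realType) (d : measure_display)
    (T : measurableType d) (mu : {measure set T -> \bar R})
    (A : nat -> set T) (rho : R) :
  (forall k, measurable (A k)) -> 0 < rho < 1 ->
  (forall k, (mu (A k) <= (rho ^+ k)%:E)%E) ->
  mu.-negligible [set x | forall K, exists2 k, (K <= k)%N & A k x].
Proof.
move=> Am /andP[rho0 rho1] muA.
pose tail K := \bigcup_j A (j + K)%N.
have tailm K : measurable (tail K) by apply: bigcupT_measurable => j.
have mu_tail K : (mu (tail K) <= (rho ^+ K / (1 - rho))%:E)%E.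
  apply: le_trans (measure_sigma_subadditive _ (fun j => Am (j + K)%N) (tailm K) _) _ => //.
  apply: lime_le; first by apply: is_cvg_nneseries.
  apply: nearW => N; apply: le_trans (_ : (series (geometric (rho ^+ K) rho) N)%:E <= _)%E.
    rewrite /series /= -sumEFin; apply: lee_sum => j _.
    by rewrite /= mulrC -exprD muA.
  by rewrite lee_fin geometric_le_lim ?exprn_ge0 ?ger0_norm ?ltW.
exists (\bigcap_K tail K); split.
- by apply: bigcapT_measurable.
- have tail_cvg0 : (fun K => (rho ^+ K / (1 - rho))%:E) @ \oo --> 0%E.
    apply: cvg_EFin; first exact: nearW.
    rewrite -(mul0r (1 - rho)^-1); apply: cvgM; last exact: cvg_cst.
    by apply: cvg_expr; rewrite ger0_norm ?ltW.
  apply/eqP; rewrite eq_le measure_ge0 andbT; apply: cvge_ge tail_cvg0.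
  apply: nearW => K; apply: le_trans (mu_tail K).
  by apply: le_measure; rewrite ?inE //; [exact: bigcapT_measurable|move=> x /(_ K I)].
- move=> x /= Ax K _; have [k Kk Akx] := Ax K.
  by exists (k - K)%N => //; rewrite subnK.
Qed.

(* The exponent [eps / 4] is far from optimal but makes the bound elementary. *)
Lemma chernoff_mgf_lt (R : realType) (q eps : R) : 0 <= q <= 1 -> 0 < eps <= 1 ->
  q * expR (eps / 4) + (1 - q) < expR (eps / 4 * (q + eps)).
Proof.
move=> /andP[q0 q1] /andP[eps0 eps1].
have lin_lb := expR_ge1Dx (eps / 4 * (q + eps)).
apply: lt_le_trans lin_lb.
have exp_lb := expR_ge1Dx (eps / 4).
have exp_ub : expR (eps / 4) * (1 - eps / 4) <= 1.
  have := expR_ge1Dx (- (eps / 4)); rewrite expRN.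
  by rewrite -(ler_pM2l (expR_gt0 (eps / 4))) mulfV ?gt_eqF ?expR_gt0.
set x := expR _ in exp_lb exp_ub *.
have x_le : x - 1 <= eps / 4 * x by lra.
have x_bound : x <= 4 / 3 by nra.
have q_scaled : q * (x - 1 - eps / 4) <= x - 1 - eps / 4 by nra.
have x_gap : x - 1 - eps / 4 <= eps / 4 * (eps / 4 * x) by nra.
nra.
Qed.

Lemma eventually_not_frequently (A : nat -> Prop) :
  ~ (forall K, exists2 k, (K <= k)%N & A k) -> \forall k \near \oo, ~ A k.
Proof.
move=> notA; apply: contrapT => not_ev; apply: notA => K; apply: contrapT => noK.
by apply: not_ev; exists K => // k /= Kk Ak; apply: noK; exists k.
Qed.

Section iid_frequencies.
Context {R : realType} {d : measure_display} {Omega : measurableType d} {T : finType}.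
(* [t0] only witnesses that [T] is inhabited. *)
Variables (P : probability Omega R) (X : nat -> Omega -> T) (law : T -> R) (t0 : T).
Hypotheses (law_ge0 : forall t, 0 <= law t) (law_sum1 : \sum_t law t = 1)
  (X_meas : forall k t, measurable [set om | X k om = t])
  (X_iid : forall (N : nat) (ts : nat -> T),
      P [set om | forall k, (k < N)%N -> X k om = ts k]
      = (\prod_(k < N) law (ts k))%:E).

Definition prefix k om : {ffun 'I_k -> T} := [ffun i : 'I_k => X i om].

Let extend {k} (g : {ffun 'I_k -> T}) (r : nat) : T :=
  if insub r is Some i then g i else t0.

Let prefix_eqE k g :
  [set om | prefix k om = g] = [set om | forall r, (r < k)%N -> X r om = extend g r].
Proof.
apply/seteqP; split => om /=; first by move=> <- r rk; rewrite /extend insubT ffunE.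
by move=> Xg; apply/ffunP => i; rewrite ffunE Xg // /extend valK.
Qed.

Lemma measurable_prefix_eq k g : measurable [set om | prefix k om = g].
Proof.
rewrite prefix_eqE.
have -> : [set om | forall r, (r < k)%N -> X r om = extend g r] =
    \bigcap_r [set om | (r < k)%N -> X r om = extend g r].
  by apply/seteqP; split => om /= Xg r; [move=> _|]; apply: Xg.
apply: bigcapT_measurable => r; case: ltnP => _.
- suff -> : [set om | true -> X r om = extend g r] = [set om | X r om = extend g r] by [].
  by apply/seteqP; split => om /=; [apply|move=> ? _].
- suff -> : [set om | false -> X r om = extend g r] = setT by [].
  by apply/seteqP; split => om.
Qed.

Lemma probability_prefix_eq k g :
  P [set om | prefix k om = g] = (\prod_(i < k) law (g i))%:E.
Proof.
by rewrite prefix_eqE X_iid; congr (_%:E); apply: eq_bigr => i _; rewrite /extend valK.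
Qed.

Definition hits (f : pred T) k om : R := \sum_(i < k) (f (X i om))%:R.
Definition mass (f : pred T) : R := \sum_(t | f t) law t.

Lemma mass_predC f : mass (predC f) = 1 - mass f.
Proof.
by rewrite -law_sum1 (bigID f predT) /= addrC addrK /mass; apply: eq_bigl.
Qed.

Lemma mass_ge0 f : 0 <= mass f.
Proof. exact: sumr_ge0. Qed.

Lemma mass_le1 f : mass f <= 1.
Proof. by have := mass_ge0 (predC f); rewrite mass_predC subr_ge0. Qed.

Lemma hits_predC f k om : hits (predC f) k om = k%:R - hits f k om.
Proof.
rewrite -[k in k%:R]card_ord -sumr_const /hits -sumrB.
by apply: eq_bigr => i _ /=; case: (f _); rewrite ?subrr ?subr0.
Qed.

Let hits_ge (f : pred T) (c : R) {k} : pred {ffun 'I_k -> T} :=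
  fun g => k%:R * c <= \sum_(i < k) (f (g i))%:R.

Let hits_geE (f : pred T) (c : R) k :
  [set om | k%:R * c <= hits f k om] = [set om | hits_ge f c (prefix k om)].
Proof.
have hitsE om : hits f k om = \sum_(i < k) (f (prefix k om i))%:R.
  by apply: eq_bigr => i _; rewrite ffunE.
by apply/seteqP; split => om /=; rewrite hitsE.
Qed.

(* Exponential Markov inequality; the prefix law is a product measure, so the
   moment generating function of [hits f k] is the [k]-th power of that of a
   single indicator. *)
Lemma hits_exp_markov (f : pred T) (lam c : R) k : 0 < lam ->
  (P [set om | (k%:R * c <= hits f k om)%R] <=
   (((\sum_t law t * expR (lam * (f t)%:R)) / expR (lam * c)) ^+ k)%:E)%E.
Proof.
move=> lam0; rewrite hits_geE; set F := @hits_ge f c k.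
pose mgf_term (g : {ffun 'I_k -> T}) :=
  (\prod_(i < k) (law (g i) * expR (lam * (f (g i))%:R))) / expR (lam * c) ^+ k.
rewrite measure_preimage_finType; last exact: measurable_prefix_eq.
rewrite (eq_bigr (fun g : {ffun 'I_k -> T} => (\prod_(i < k) law (g i))%:E)); last first.
  by move=> g _; exact: probability_prefix_eq.
rewrite sumEFin lee_fin (le_trans (_ : _ <= \sum_g mgf_term g)) //.
  rewrite [leRHS](bigID F) /= -[leLHS]addr0 lerD //; last first.
    apply: sumr_ge0 => g _; apply: divr_ge0; last by rewrite exprn_ge0 ?expR_ge0.
    by apply: prodr_ge0 => i _; rewrite mulr_ge0 ?expR_ge0.
  apply: ler_sum => g Fg; rewrite /mgf_term big_split /= -mulrA ler_peMr //.
    by apply: prodr_ge0.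
  rewrite ler_pdivlMr ?exprn_gt0 ?expR_gt0 // mul1r -expR_sum -expRM_natl ler_expR.
  by rewrite -mulr_sumr mulrCA ler_pM2l.
rewrite /mgf_term -mulr_suml.
rewrite -(bigA_distr_bigA (fun (i : 'I_k) t => law t * expR (lam * (f t)%:R))).
by rewrite prodr_const card_ord exprMn exprVn.
Qed.

Lemma hits_upper_deviation (f : pred T) (eps : R) : 0 < eps <= 1 ->
  exists2 rho : R, 0 < rho < 1 & forall k,
    (P [set om | (k%:R * (mass f + eps) <= hits f k om)%R] <= (rho ^+ k)%:E)%E.
Proof.
move=> eps01; have /andP[eps0 _] := eps01.
set lam := eps / 4; set mgf := \sum_t law t * expR (lam * (f t)%:R).
have mgfE : mgf = mass f * expR lam + (1 - mass f).
  rewrite -mass_predC /mgf (bigID f predT) /= mulr_suml; congr (_ + _).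
    by apply: eq_bigr => t ->; rewrite mulr1.
  by apply: eq_bigr => t /negbTE ->; rewrite mulr0 expR0 mulr1.
exists (mgf / expR (lam * (mass f + eps))); last first.
  by move=> k; apply: hits_exp_markov; rewrite divr_gt0.
have mgf_gt0 : 0 < mgf.
  rewrite mgfE; have := mass_ge0 f; have := mass_le1 f; have := expR_ge1Dx lam.
  by rewrite /lam; nra.
rewrite divr_gt0 ?expR_gt0 //= ltr_pdivrMr ?expR_gt0 // mul1r mgfE.
by apply: chernoff_mgf_lt; rewrite ?mass_ge0 ?mass_le1 ?eps01.
Qed.

Lemma eventually_hits_lt (f : pred T) (eps : R) : 0 < eps <= 1 ->
  {ae P, forall om, \forall k \near \oo, hits f k om < k%:R * (mass f + eps)}.
Proof.
move=> /(hits_upper_deviation f) [rho rho01 P_le].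
have : P.-negligible [set om | forall K, exists2 k, (K <= k)%N &
                        (k%:R * (mass f + eps) <= hits f k om)%R].
  apply: negligible_limsup_geometric rho01 P_le => k.
  by rewrite hits_geE; apply: measurable_preimage_finType; exact: measurable_prefix_eq.
apply: negligibleS => om /= not_ev; apply: contrapT => not_often; apply: not_ev.
by move/eventually_not_frequently: not_often; apply: filterS => k; rewrite ltNge => /negP.
Qed.

Theorem cvg_hits_frequency (f : pred T) :
  {ae P, forall om, (fun k => hits f k om / k%:R) @ \oo --> mass f}.
Proof.
pose e N : R := N.+1%:R^-1.
have e01 N : 0 < e N <= 1 by rewrite invr_gt0 ltr0n /= invf_le1 ?ltr0n // ler1n.
have : {ae P, forall om, forall N,
    (\forall k \near \oo, hits f k om < k%:R * (mass f + e N)) /\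
    (\forall k \near \oo, hits (predC f) k om < k%:R * (mass (predC f) + e N))}.
  by apply: ae_foralln => N; apply/near_andP; split; exact: eventually_hits_lt.
apply: filterS => om bounds; apply/cvgrPdist_le => eps eps0.
have [N eN_le] : exists N, e N <= eps.
  exists (Num.truncn eps^-1); rewrite /e -[leRHS]invrK lef_pV2 ?posrE ?invr_gt0 //.
  exact/ltW/truncnS_gt.
have [up low] := bounds N; near=> k.
have k_gt0 : 0 < k%:R :> R by rewrite ltr0n; near: k; exact: nbhs_infty_gt.
have hits_up : hits f k om / k%:R < mass f + e N.
  by rewrite ltr_pdivrMr // mulrC; near: k.
have hits_low : (k%:R - hits f k om) / k%:R < 1 - mass f + e N.
  by rewrite ltr_pdivrMr // mulrC -hits_predC -mass_predC; near: k.
rewrite mulrBl divff ?gt_eqF // in hits_low.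
by rewrite ler_norml; apply/andP; split; lra.
Unshelve. all: by end_near.
Qed.

End iid_frequencies.

Section positive_sums.
Context {R : realDomainType} {I : finType} (F : I -> R).

Lemma psumr_ge_term j : (forall i, 0 <= F i) -> F j <= \sum_i F i.
Proof. by move=> F0; rewrite (bigD1 j) //= lerDl sumr_ge0. Qed.

Lemma psumr_gt0 j : (forall i, 0 <= F i) -> 0 < F j -> 0 < \sum_i F i.
Proof. by move=> F0 Fj; apply: lt_le_trans Fj (psumr_ge_term j F0). Qed.

End positive_sums.

Section normalization.
Context {R : realFieldType} {I : finType} (F : I -> R).
Hypothesis F_gt0 : forall i, 0 < F i.

Lemma normalize_gt0 i : 0 < F i / \sum_j F j.
Proof. by rewrite divr_gt0 // (psumr_gt0 F i) // => j; exact: ltW. Qed.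

Lemma normalize_sum1 (i0 : I) : \sum_i F i / \sum_j F j = 1.
Proof. by rewrite -mulr_suml divff // gt_eqF // (psumr_gt0 F i0) // => j; exact: ltW. Qed.

End normalization.

(* Gibbs' inequality, via [ln x <= x - 1] applied to the likelihood ratio [g / f]. *)
Section relative_entropy.
Context {R : realType} {I : finType} (f g : I -> R).
Hypotheses (f_gt0 : forall a, 0 < f a) (g_gt0 : forall a, 0 < g a)
  (fg_sum : \sum_a f a = \sum_a g a).

Let ratio a := g a / f a.
Let gap a := f a * (ratio a - 1 - ln (ratio a)).

Let ratio_gt0 a : 0 < ratio a. Proof. exact: divr_gt0. Qed.

Let gap_ge0 a : 0 <= gap a.
Proof.
apply: mulr_ge0; first exact: ltW.
by have := expR_ge1Dx (ln (ratio a)); rewrite lnK ?posrE //; lra.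
Qed.

Let relative_entropyE : \sum_a f a * ln (f a / g a) = \sum_a gap a.
Proof.
have gapE a : gap a = g a - f a + f a * ln (f a / g a).
  rewrite /gap /ratio -invf_div lnV ?posrE ?divr_gt0 // invf_div.
  by field; rewrite gt_eqF.
by rewrite (eq_bigr _ (fun a _ => gapE a)) big_split /= sumrB fg_sum subrr add0r.
Qed.

Lemma relative_entropy_ge0 : 0 <= \sum_a f a * ln (f a / g a).
Proof. by rewrite relative_entropyE; apply: sumr_ge0 => a _. Qed.

Lemma relative_entropy_eq0 : \sum_a f a * ln (f a / g a) = 0 -> f =1 g.
Proof.
rewrite relative_entropyE => /psumr_eq0P gap0 a.
have /eqP := gap0 (fun a _ => gap_ge0 a) a isT.
rewrite mulf_eq0 gt_eqF //= subr_eq0 => /eqP ratio_eq.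
have ln_ratio0 : ln (ratio a) = 0.
  apply: contra_eq ratio_eq => /expR_gt1Dx; rewrite lnK ?posrE // => lt_ratio.
  by apply/negP => /eqP; lra.
have : ratio a = 1 by apply: ln_inj; rewrite ?posrE ?ln1.
by move/(congr1 ( *%R^~ (f a))); rewrite mul1r divfK ?gt_eqF.
Qed.

End relative_entropy.

Lemma lb_gt0_of_eventually {R : realDomainType} (u : nat -> R) (c : R) :
  0 < c -> (\forall t \near \oo, c <= u t) -> (forall t, 0 < u t) ->
  exists2 c', 0 < c' & forall t, c' <= u t.
Proof.
move=> c0 [N _ cu] u_gt0; elim: N c c0 cu => [|N IH] c c0 cu.
  by exists c => // t; apply: cu.
apply: (IH (Num.min c (u N))); first by rewrite lt_min c0 u_gt0.
move=> t /=; rewrite leq_eqVlt => /orP[/eqP <-|Nt]; first by rewrite ge_min lexx orbT.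
by rewrite ge_min cu.
Qed.

Lemma le_limn_einf {R : realType} (u : nat -> R) (a : R) :
  (forall eps, 0 < eps -> \forall t \near \oo, a - eps <= u t) ->
  (a%:E <= limn_einf (fun t => (u t)%:E))%E.
Proof.
move=> u_ge; apply/lee_addgt0Pr => eps eps0.
have : ((a - eps)%:E <= limn_einf (fun t => (u t)%:E))%E; last by rewrite EFinB leeBlDr.
rewrite limn_einf_lim; apply: lime_ge; first exact: is_cvg_einfs.
have [N _ Nu] := u_ge eps eps0; exists N => // k /= Nk.
apply: le_ereal_inf_tmp => _ [j /= kj <-]; rewrite lee_fin; apply: Nu.
exact: leq_trans Nk kj.
Qed.

Lemma cvg_invn {R : realType} : (fun t : nat => t%:R^-1 : R) @ \oo --> 0.
Proof.
apply/(cvgrVy (f := fun t : nat => t%:R^-1)).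
  by near=> t; rewrite invr_gt0 ltr0n; near: t; exact: nbhs_infty_gt.
by rewrite /unstable.inv_fun; under eq_fun do rewrite invrK; exact: cvgr_idn.
Unshelve. all: by end_near.
Qed.

(** * Asymptotics of the min-protocol *)

Section neighbourhood_minimum.
Variables (R : realType) (n m : nat) (E : rel 'I_n) (mu pi' : 'I_n -> 'I_m -> R).

Lemma min_nb_le_pi i p : min_nb E mu pi' i p <= pi' i p.
Proof. exact: bigmin_le_id. Qed.

Lemma min_nb_le_mu i j p : E j i -> min_nb E mu pi' i p <= mu j p.
Proof. exact: bigmin_le_cond. Qed.

Lemma min_nb_ge c i p :
  c <= pi' i p -> (forall j, E j i -> c <= mu j p) -> c <= min_nb E mu pi' i p.
Proof. exact: le_bigmin. Qed.

Lemma min_nb_gt0 i p :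
  0 < pi' i p -> (forall j, E j i -> 0 < mu j p) -> 0 < min_nb E mu pi' i p.
Proof. exact: lt_bigmin. Qed.

End neighbourhood_minimum.

Definition signal_count {R : realType} {n} {S : 'I_n -> finType}
  (w : nat -> profile S) {j} (a : S j) t : R := \sum_(r < t) (w r j == a)%:R.

Section beliefs.
Variables (R : realType) (n m : nat) (S : 'I_n -> finType)
  (l : 'I_m -> profile S -> R) (thstar : 'I_m)
  (E : rel 'I_n) (pi0 mu0 : 'I_n -> 'I_m -> R) (w : nat -> profile S).
Hypotheses (l_sum1 : forall th, \sum_(w : profile S) l th w = 1)
  (lmarg_gt0 : forall i th (a : S i), 0 < lmarg l i th a)
  (pi0_sum1 : forall i, \sum_(p < m) pi0 i p = 1)
  (mu0_sum1 : forall i, \sum_(p < m) mu0 i p = 1)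
  (beliefs0_gt0 : forall i th, 0 < pi0 i th /\ 0 < mu0 i th).

Local Notation lm := (lmarg l).
Local Notation pit := (pi_b l E pi0 mu0 w).
Local Notation mut := (mu_b l E pi0 mu0 w).

Lemma lmarg_sum1 j p : \sum_(a : S j) lm j p a = 1.
Proof. by rewrite -(l_sum1 p) (partition_big (fun x : profile S => x j) predT). Qed.

Lemma pi_bS t j p :
  pit t.+1 j p = lm j p (w t j) * pit t j p / \sum_q lm j q (w t j) * pit t j q.
Proof. by []. Qed.

Lemma mu_bS t i p :
  mut t.+1 i p = min_nb E (mut t) (pit t.+1) i p / \sum_q min_nb E (mut t) (pit t.+1) i q.
Proof. by []. Qed.

Lemma pi_b_gt0 t j p : 0 < pit t j p.
Proof.
elim: t j p => [|t IH] j p; first by case: (beliefs0_gt0 j p).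
by rewrite pi_bS; apply: normalize_gt0 => q; rewrite mulr_gt0.
Qed.

Lemma pi_b_sum1 t j : \sum_(p < m) pit t j p = 1.
Proof.
case: t => [|t]; first exact: pi0_sum1.
rewrite (eq_bigr _ (fun p _ => pi_bS t j p)).
by apply: normalize_sum1 thstar => q; rewrite mulr_gt0 ?pi_b_gt0.
Qed.

Lemma mu_b_gt0 t i p : 0 < mut t i p.
Proof.
elim: t i p => [|t IH] i p; first by case: (beliefs0_gt0 i p).
by rewrite mu_bS; apply: normalize_gt0 => q; apply: min_nb_gt0 => [|j _]; rewrite ?pi_b_gt0 ?IH.
Qed.

Lemma mu_b_sum1 t i : \sum_(p < m) mut t i p = 1.
Proof.
case: t => [|t]; first exact: mu0_sum1.
rewrite (eq_bigr _ (fun p _ => mu_bS t i p)).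
by apply: normalize_sum1 thstar => q; apply: min_nb_gt0 => [|j _]; rewrite ?pi_b_gt0 ?mu_b_gt0.
Qed.

Lemma pi_b_le1 t j p : pit t j p <= 1.
Proof. by rewrite -(pi_b_sum1 t j) psumr_ge_term // => q; exact/ltW/pi_b_gt0. Qed.

Lemma mu_b_le1 t i p : mut t i p <= 1.
Proof. by rewrite -(mu_b_sum1 t i) psumr_ge_term // => q; exact/ltW/mu_b_gt0. Qed.

Definition belief_llr t j p := ln (pit t j p) - ln (pit t j thstar).
Definition signal_llr {j} p (a : S j) := ln (lm j p a) - ln (lm j thstar a).

Lemma belief_llrS t j p :
  belief_llr t.+1 j p = belief_llr t j p + signal_llr p (w t j).
Proof.
have Z_gt0 : 0 < \sum_q lm j q (w t j) * pit t j q.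
  rewrite (psumr_gt0 _ thstar) ?mulr_gt0 ?pi_b_gt0 // => q.
  by rewrite ltW ?mulr_gt0 ?pi_b_gt0.
rewrite /belief_llr !pi_bS !ln_div ?posrE ?mulr_gt0 ?pi_b_gt0 //.
by rewrite !lnM ?posrE ?pi_b_gt0 // /signal_llr; ring.
Qed.

Lemma belief_llrE t j p :
  belief_llr t j p =
  belief_llr 0 j p + \sum_(a : S j) signal_count w a t * signal_llr p a.
Proof.
elim: t => [|t IH].
  by rewrite big1 ?addr0 // => a _; rewrite /signal_count big_ord0 mul0r.
rewrite belief_llrS IH -addrA; congr (_ + _).
under [RHS]eq_bigr do rewrite /signal_count big_ord_recr /= mulrDl.
rewrite big_split /=; congr (_ + _).
rewrite (bigD1 (w t j)) //= eqxx mul1r big1 ?addr0 // => a.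
by rewrite eq_sym => /negbTE ->; rewrite mul0r.
Qed.

Lemma KL_signal_llr j p :
  KL l j thstar p = - \sum_(a : S j) lm j thstar a * signal_llr p a.
Proof.
rewrite /KL -sumrN; apply: eq_bigr => a _.
by rewrite /signal_llr ln_div ?posrE ?lmarg_gt0 //; ring.
Qed.

Lemma KL_ge0 j p : 0 <= KL l j thstar p.
Proof. by apply: relative_entropy_ge0; rewrite ?lmarg_sum1. Qed.

Lemma signal_llr_KL0 j p :
  KL l j thstar p = 0 -> forall a : S j, signal_llr p a = 0.
Proof.
move=> /relative_entropy_eq0 eq_lm a; rewrite /signal_llr eq_lm ?subrr //.
by rewrite !lmarg_sum1.
Qed.

Lemma pi_b_trueE t j : pit t j thstar = (\sum_p expR (belief_llr t j p))^-1.
Proof.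
have piE p : expR (belief_llr t j p) = pit t j p / pit t j thstar.
  by rewrite /belief_llr -ln_div ?posrE ?pi_b_gt0 // lnK // posrE divr_gt0 ?pi_b_gt0.
under eq_bigr do rewrite piE.
by rewrite -mulr_suml pi_b_sum1 mul1r invrK.
Qed.

Hypothesis signal_freq : forall j (a : S j),
  (fun t => signal_count w a t / t%:R) @ \oo --> lm j thstar a.

Lemma cvg_belief_llr j p :
  (fun t => belief_llr t j p / t%:R) @ \oo --> - KL l j thstar p.
Proof.
have -> : (fun t => belief_llr t j p / t%:R) = fun t => belief_llr 0 j p * t%:R^-1 +
    \sum_(a : S j) signal_count w a t / t%:R * signal_llr p a.
  apply/funext => t; rewrite belief_llrE mulrDl mulr_suml.
  by congr (_ + _); apply: eq_bigr => a _; rewrite mulrAC.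
rewrite KL_signal_llr opprK -[X in _ --> X]add0r; apply: cvgD.
  by rewrite -(mulr0 (belief_llr 0 j p)); apply: cvgM; [exact: cvg_cst|exact: cvg_invn].
apply: cvg_big => [|a _]; first exact: add_continuous.
exact: cvgM (@signal_freq j a) (cvg_cst _).
Qed.

Lemma belief_llr_eventually_le j p :
  \forall t \near \oo, belief_llr t j p <= `|belief_llr 0 j p|.
Proof.
have [KL0|KL_neq0] := eqVneq (KL l j thstar p) 0.
  apply: nearW => t; rewrite belief_llrE big1 ?addr0 ?ler_norm // => a _.
  by rewrite signal_llr_KL0 ?mulr0.
have KL_gt0 : 0 < KL l j thstar p by rewrite lt_def KL_neq0 KL_ge0.
have llr_neg : \forall t \near \oo, belief_llr t j p / t%:R < 0.
  by apply: (cvgr_lt _ (cvg_belief_llr j p)); rewrite oppr_lt0.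
near=> t; apply: le_trans (normr_ge0 _); apply: ltW.
have t_gt0 : 0 < t%:R :> R by rewrite ltr0n; near: t; exact: nbhs_infty_gt.
have : belief_llr t j p / t%:R < 0 by near: t.
by rewrite ltr_pdivrMr // mul0r.
Unshelve. all: by end_near.
Qed.

Lemma pi_b_true_lb j : exists2 c, 0 < c & forall t, c <= pit t j thstar.
Proof.
pose Z := \sum_p expR `|belief_llr 0 j p|.
have Z_gt0 : 0 < Z by rewrite (psumr_gt0 _ thstar) ?expR_gt0 // => p; exact: expR_ge0.
apply: (lb_gt0_of_eventually _ Z^-1); [by rewrite invr_gt0| |move=> t; exact: pi_b_gt0].
have : \forall t \near \oo, forall p, belief_llr t j p <= `|belief_llr 0 j p|.
  by apply: filter_forall => p; exact: belief_llr_eventually_le.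
apply: filterS => t llr_le; rewrite pi_b_trueE lef_pV2 ?posrE //.
  by apply: ler_sum => p _; rewrite ler_expR.
by rewrite (psumr_gt0 _ thstar) ?expR_gt0 // => p; exact: expR_ge0.
Qed.

Let Zmin t i := \sum_q min_nb E (mut t) (pit t.+1) i q.

Let min_nb_step_gt0 t i p : 0 < min_nb E (mut t) (pit t.+1) i p.
Proof. by apply: min_nb_gt0 => [|j _]; rewrite ?pi_b_gt0 ?mu_b_gt0. Qed.

Let Zmin_le1 t i : Zmin t i <= 1.
Proof. by rewrite -(pi_b_sum1 t.+1 i); apply: ler_sum => p _; exact: min_nb_le_pi. Qed.

Let min_nb_step_le_Zmin t i p : min_nb E (mut t) (pit t.+1) i p <= Zmin t i.
Proof. by apply: psumr_ge_term => q; exact/ltW/min_nb_step_gt0. Qed.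

Lemma true_beliefs_lb : exists2 dl, 0 < dl &
  forall t i, dl <= mut t i thstar /\ dl <= pit t i thstar.
Proof.
have [c c_gt0 c_le] := fin_all_exists2 pi_b_true_lb.
pose dl := \big[Order.min/1]_j Order.min (c j) (mu0 j thstar).
have [dl_c dl_mu0] : (forall j, dl <= c j) /\ (forall j, dl <= mu0 j thstar).
  by split=> j; apply: le_trans (bigmin_le _ j _) _; rewrite ge_min lexx ?orbT.
exists dl.
  by apply: lt_bigmin => // j _; rewrite lt_min c_gt0; case: (beliefs0_gt0 j thstar).
have dl_pi t i : dl <= pit t i thstar by apply: le_trans (c_le i t).
suff dl_mu t i : dl <= mut t i thstar by move=> t i; split.
elim: t i => [|t IH] i; first exact: dl_mu0.
rewrite mu_bS; apply: le_trans (_ : min_nb E (mut t) (pit t.+1) i thstar <= _).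
  by apply: min_nb_ge => [|j _]; rewrite ?dl_pi ?IH.
have Z_gt0 : 0 < Zmin t i by apply: lt_le_trans (min_nb_step_gt0 t i thstar) _.
by rewrite ler_pdivlMr // ler_piMr ?Zmin_le1 // ltW.
Qed.

Section lower_bound.
Variable dl : R.
Hypotheses (dl_gt0 : 0 < dl)
  (dl_le : forall t i, dl <= mut t i thstar /\ dl <= pit t i thstar).

Let mu_bS_le t i p x : min_nb E (mut t) (pit t.+1) i p <= x -> mut t.+1 i p <= x / dl.
Proof.
move=> min_le; rewrite mu_bS.
have dl_Z : dl <= Zmin t i.
  apply: le_trans (min_nb_step_le_Zmin t i thstar); apply: min_nb_ge => [|j _];
  by case: (dl_le t.+1 i) => //; case: (dl_le t j).
apply: le_trans (_ : min_nb E (mut t) (pit t.+1) i p / dl <= _).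
  by rewrite ler_pM2l ?min_nb_step_gt0 // lef_pV2 ?posrE // (lt_le_trans dl_gt0).
by rewrite ler_pM2r ?invr_gt0.
Qed.

Lemma mu_b_edge_le t i j p : E j i -> mut t.+1 i p <= mut t j p / dl.
Proof. by move=> Eji; apply: mu_bS_le; exact: min_nb_le_mu. Qed.

Lemma mu_b_pi_le t i p : mut t.+1 i p <= pit t.+1 i p / dl.
Proof. by apply: mu_bS_le; exact: min_nb_le_pi. Qed.

Lemma mu_b_path_le th t {x} {q : seq 'I_n} : path E x q ->
  mut (t + size q) (last x q) th <= mut t x th / dl ^+ size q.
Proof.
elim: q x t => [|y q IH] x t /=; first by rewrite addn0 expr0 divr1.
move=> /andP[Exy y_path]; rewrite addnS -addSn.
apply: le_trans (IH y t.+1 y_path) _.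
by rewrite exprS invfM mulrA ler_pM2r ?invr_gt0 ?exprn_gt0 // mu_b_edge_le.
Qed.

(* Along a path from [v], each step divides by at most [dl], and the last one
   compares with the private belief of [v]. *)
Lemma ln_mu_b_path_le th v (q : seq 'I_n) s : path E v q ->
  ln (mut (s.+1 + size q) (last v q) th) <=
  belief_llr s.+1 v th - (size q).+1%:R * ln dl.
Proof.
move=> v_path.
have mu_le : mut (s.+1 + size q) (last v q) th <= pit s.+1 v th / dl ^+ (size q).+1.
  apply: le_trans (mu_b_path_le th s.+1 v_path) _.
  by rewrite exprS invfM mulrA ler_pM2r ?invr_gt0 ?exprn_gt0 // mu_b_pi_le.
apply: le_trans (_ : ln (pit s.+1 v th / dl ^+ (size q).+1) <= _).
  by rewrite ler_ln // posrE ?mu_b_gt0 // divr_gt0 ?pi_b_gt0 ?exprn_gt0.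
rewrite ln_div ?posrE ?pi_b_gt0 ?exprn_gt0 // lnXn // /belief_llr lerB //.
  by rewrite lerBDr gerDl ln_le0 ?pi_b_le1.
by rewrite mulr_natl.
Qed.

End lower_bound.

Hypothesis connected : forall i j : 'I_n, connect E i j.

Lemma ln_mu_b_rate i th v eps : 0 < eps ->
  \forall T \near \oo, ln (mut T i th) <= - (T%:R * (KL l v thstar th - eps)).
Proof.
move=> eps_gt0; have [dl dl_gt0 dl_le] := true_beliefs_lb.
have [q v_path i_last] := connectP (connected v i).
set K := KL l v thstar th; set d := size q.
pose C := d%:R * (K - eps / 2) - d.+1%:R * ln dl.
have llr_le : \forall s \near \oo, belief_llr s v th <= s%:R * (- K + eps / 2).
  have K_lt : - K < - K + eps / 2 by rewrite ltrDl divr_gt0.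
  have llr_lt := cvgr_lt _ (cvg_belief_llr v th) _ K_lt.
  near=> s; have s_gt0 : 0 < s%:R :> R by rewrite ltr0n; near: s; exact: nbhs_infty_gt.
  have : belief_llr s v th / s%:R < - K + eps / 2 by near: s; exact: llr_lt.
  by rewrite ltr_pdivrMr // mulrC => /ltW.
have [N _ llr_leN] := llr_le.
have T_large : \forall T \near \oo, C <= T%:R * (eps / 2).
  move/cvgryPge: (@cvgr_idn R) => /(_ (C / (eps / 2))); apply: filterS => T.
  by rewrite ler_pdivrMr ?divr_gt0.
(* With [T = s + d + 1], [ln mu_T <= (T - d) (eps / 2 - K) - (d + 1) ln dl], and
   the constant part [C] is eventually dominated by [T eps / 2]. *)
near=> T.
have T_ge : (N + d.+1 <= T)%N by near: T; exact: nbhs_infty_ge.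
have := ln_mu_b_path_le dl dl_gt0 dl_le th v q (T - d.+1) v_path.
have -> : ((T - d.+1).+1 + d = T)%N by lia.
rewrite -i_last -/d => mu_le.
have N_le : (N <= (T - d.+1).+1)%N by lia.
have := llr_leN _ N_le.
have -> : (T - d.+1).+1%:R = T%:R - d%:R :> R by rewrite -natrB; [congr (_%:R); lia|lia].
have C_le : C <= T%:R * (eps / 2) by near: T.
rewrite /C in C_le; move: mu_le C_le; set x := T%:R; set y := ln dl; set z := d%:R.
have -> : d.+1%:R = z + 1 :> R by rewrite -natr1.
by move=> *; nra.
Unshelve. all: by end_near.
Qed.

Lemma cvg_mu_b_informative i th v : informative l thstar th v ->
  (fun t => mut t i th) @ \oo --> 0.
Proof.
move=> KL_gt0; set K := KL l v thstar th in KL_gt0.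
have K2_gt0 : 0 < K / 2 by rewrite divr_gt0.
apply: (@squeeze_cvgr _ _ _ _ (cst 0) (geometric 1 (expR (- (K / 2))))).
- have := ln_mu_b_rate i th v _ K2_gt0; apply: filterS => t ln_mu_le.
  rewrite ltW ?mu_b_gt0 //= mul1r -expRM_natl -ler_ln ?posrE ?mu_b_gt0 ?expR_gt0 //.
  by rewrite expRK; move: ln_mu_le; rewrite -/K; lra.
- exact: cvg_cst.
- by apply: cvg_geometric; rewrite gtr0_norm ?expR_gt0 // expR_lt1 oppr_lt0.
Qed.

Hypothesis identifiable : forall p q : 'I_m, p != q -> exists i, informative l p q i.

Lemma cvg_mu_b_true i : (fun t => mut t i thstar) @ \oo --> (1 : R).
Proof.
have false_cvg0 : (fun t => \sum_(p | p != thstar) mut t i p) @ \oo --> 0.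
  suff : (fun t => \sum_(p | p != thstar) mut t i p) @ \oo -->
           \sum_(p | p != thstar) (0 : R) by rewrite big1.
  apply: cvg_big => [|p p_neq]; first exact: add_continuous.
  have [v v_inf] : exists v, informative l thstar p v.
    by apply: identifiable; rewrite eq_sym.
  exact: cvg_mu_b_informative v_inf.
have -> : (fun t => mut t i thstar) = fun t => 1 - \sum_(p | p != thstar) mut t i p.
  by apply/funext => t; rewrite -(mu_b_sum1 t i) (bigD1 thstar) //= addrK.
by rewrite -[X in _ --> X]subr0; apply: cvgB; [exact: cvg_cst|].
Qed.

Lemma mu_b_liminf_rate i th :
  ((\big[Num.max/0]_(v | informative l thstar th v) KL l v thstar th)%:E
   <= limn_einf (fun t => ((- ln (mut t i th)) / t%:R)%:E))%E.
Proof.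
apply: le_limn_einf; elim/big_ind: _.
- move=> eps eps_gt0; apply: nearW => t; rewrite sub0r.
  apply: le_trans (_ : 0 <= _); first by rewrite oppr_le0 ltW.
  by rewrite divr_ge0 // oppr_ge0 ln_le0 // mu_b_le1.
- move=> x y x_le y_le eps eps_gt0.
  apply: filterS2 (x_le eps eps_gt0) (y_le eps eps_gt0) => t.
  by move=> x_le_t y_le_t; rewrite lerBlDr ge_max -!lerBlDr x_le_t y_le_t.
move=> v _ eps eps_gt0.
have := ln_mu_b_rate i th v _ eps_gt0.
move/filterS2: (nbhs_infty_gt 0); apply => t t_gt0.
by rewrite ler_pdivlMr ?ltr0n //; lra.
Qed.

End beliefs.

Theorem corollary1
  (R : realType) (n m : nat) (S : 'I_n -> finType)
  (l : 'I_m -> profile S -> R) (thstar : 'I_m)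
  (E : rel 'I_n) (pi0 mu0 : 'I_n -> 'I_m -> R)
  (d : measure_display) (Omega : measurableType d) (P : probability Omega R)
  (s : nat -> Omega -> profile S)
  (l_ge0 : forall th w, 0 <= l th w)
  (l_sum1 : forall th, \sum_(w : profile S) l th w = 1)
  (lmarg_gt0 : forall i th (a : S i), 0 < lmarg l i th a)
  (* s k is the signal profile s_{k+1}; profiles are i.i.d. with law l(.|theta_star) *)
  (s_meas : forall k w, measurable [set om | s k om = w])
  (s_iid : forall (N : nat) (ws : nat -> profile S),
      P [set om | forall k, (k < N)%N -> s k om = ws k]
      = (\prod_(k < N) l thstar (ws k))%:E)
  (pi0_sum1 : forall i, \sum_(p < m) pi0 i p = 1)
  (mu0_sum1 : forall i, \sum_(p < m) mu0 i p = 1)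
  (* (i) global identifiability *)
  (H1 : forall p q : 'I_m, p != q -> exists i, informative l p q i)
  (* (ii) strong connectivity *)
  (H2 : forall i j : 'I_n, connect E i j)
  (* (iii) positive priors *)
  (H3 : forall i th, 0 < pi0 i th /\ 0 < mu0 i th) :
  (forall i : 'I_n,
     {ae P, forall om,
        ((fun t : nat => mu_b l E pi0 mu0 (s ^~ om) t i thstar) @ \oo --> (1 : R))}) /\
  (forall (i : 'I_n) (th : 'I_m), th != thstar ->
     {ae P, forall om,
        ((\big[Num.max/0]_(v | informative l thstar th v) KL l v thstar th)%:E
         <= limn_einf (fun t : nat =>
              ((- ln (mu_b l E pi0 mu0 (s ^~ om) t i th)) / t%:R)%:E))%E}).
Proof.
have [w0 _] : exists w0 : profile S, True.
  case: (pickP (fun _ : profile S => true)) => [w0 _|none]; first by exists w0.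
  have := l_sum1 thstar; rewrite big1 => [/eqP|w]; last by have := none w.
  by rewrite eq_sym oner_eq0.
have freq_ae : {ae P, forall om, forall j (a : S j),
    (fun t => signal_count (s ^~ om) a t / t%:R) @ \oo --> lmarg l j thstar a}.
  apply: filter_forall => j; apply: filter_forall => a.
  exact: (cvg_hits_frequency P s (l thstar) w0 (l_ge0 thstar) (l_sum1 thstar)
            s_meas s_iid (fun x => x j == a)).
split=> [i|i th _]; apply: filterS freq_ae => om freq.
- by apply: cvg_mu_b_true.
- by apply: mu_b_liminf_rate.
Qed.
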